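(* Let $\pi$ be irreducible combinatorial data, $w\in\mathbb R^{\mathcal A}$, and let $\underline\gamma^*$ be a finite path in the Rauzy diagram starting at $\pi$. There exists an affine interval exchange map with data $\pi$ and slope vector $\exp w$ such that the first steps of its Rauzy–Veech algorithm are defined and follow the path $\underline\gamma^*$ if and only if there exists $\lambda$ with $\lambda_\alpha>0$ for all $\alpha$ and $\sum_\alpha\lambda_\alpha w_\alpha=0$ such that the first steps of the Rauzy–Veech algorithm of the standard i.e.m. $T_{\pi,\lambda}$ are defined and follow $\underline\gamma^*$.
   Context: Affine i.e.m. with data $\pi$: map on an interval $I$ sending each interval $I^t_\alpha$ of a partition ordered by $\pi_t$ increasingly and affinely onto the interval $I^b_\alpha$ of a partition ordered by $\pi_b$; slope vector $\exp w$ means $|I^b_\alpha|=e^{w_\alpha}|I^t_\alpha|$. Standard i.e.m. $T_{\pi,\lambda}$: the case $|I^t_\alpha|=|I^b_\alpha|=\lambda_\alpha$ (a translation on each piece). Rauzy–Veech step: let $\pi_t(\alpha_t)=\pi_b(\alpha_b)=d$ and let $u^t_{d-1},u^b_{d-1}$ be the left endpoints of $I^t_{\alpha_t}$, $I^b_{\alpha_b}$; if they differ, replace the map by its first return map to $(0,\max(u^t_{d-1},u^b_{d-1}))$, which is again an (affine) i.e.m. with data $R_t(\pi)$ if $u^t_{d-1}<u^b_{d-1}$ (top type: $\pi_t$ unchanged, $\alpha_b$ moved in the bottom line to just after $\alpha_t$) or $R_b(\pi)$ if $u^b_{d-1}<u^t_{d-1}$ (bottom type, symmetric). The arrows $\pi\to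 R_t(\pi)$, $\pi\to R_b(\pi)$ form the Rauzy diagram, and the successive steps define a path in it. *)

From Stdlib Require Import Reals List Arith Permutation.
Import ListNotations.
Open Scope R_scope.

(* Alphabet A = {0, ..., d-1}.  Combinatorial data pi = (pi_t, pi_b) is given
   by the top and bottom lines: [pt] lists the letters in the order pi_t
   (pt[i] is the letter at position i+1 of the top line), similarly [pb]. *)

Definition sumA (d : nat) (f : nat -> R) : R :=
  fold_right Rplus 0 (map f (seq 0 d)).

Definition irreducible (d : nat) (pt pb : list nat) : Prop :=
  forall k : nat, (0 < k)%nat -> (k < d)%nat ->
    ~ (forall a : nat, In a (firstn k pt) <-> In a (firstn k pb)).

(* Data of an affine i.e.m.: combinatorial data and the lengths of the top
   intervals I^t_alpha ([lt]) and bottom intervals I^b_alpha ([lb]).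
   The interval I is (0, sum of lengths); the map sends I^t_alpha affinely
   and increasingly onto I^b_alpha. *)
Record aiem := Aiem { a_pt : list nat; a_pb : list nat;
                      a_lt : nat -> R; a_lb : nat -> R }.

Definition is_affine_iem (d : nat) (pt pb : list nat) (w : nat -> R)
  (T : aiem) : Prop :=
  a_pt T = pt /\ a_pb T = pb /\
  (forall a, (a < d)%nat -> 0 < a_lt T a) /\
  (forall a, (a < d)%nat -> a_lb T a = exp (w a) * a_lt T a) /\
  sumA d (a_lt T) = sumA d (a_lb T).

Definition std_iem (pt pb : list nat) (lam : nat -> R) : aiem :=
  Aiem pt pb lam lam.

Definition move_after (x y : nat) (l : list nat) : list nat :=
  flat_map (fun z => if Nat.eqb z y then [z; x] else [z])
           (filter (fun z => negb (Nat.eqb z x)) l).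

Definition upd (f : nat -> R) (a : nat) (v : R) : nat -> R :=
  fun b => if Nat.eqb b a then v else f b.

Inductive rv_type := TopType | BotType.

(* With alpha_t, alpha_b the last letters of the top
   and bottom lines, u^t_{d-1} = |I| - lt alpha_t and u^b_{d-1} = |I| - lb alpha_b.
   - top type (u^t < u^b, i.e. lb alpha_b < lt alpha_t): first return map to
     (0, u^b_{d-1}); I^t_{alpha_t} is shortened by |I^b_{alpha_b}|, and the old
     I^b_{alpha_t} is split into the new I^b_{alpha_t} (image of the shortened
     piece) followed by the new I^b_{alpha_b} (image of I^b_{alpha_b} by the
     alpha_t branch);
   - bottom type (symmetric);
   - equality: the step is not defined. *)
Definition rv_step (T : aiem) : option (rv_type * aiem) :=
  let pt := a_pt T in let pb := a_pb T in
  let lt := a_lt T in let lb := a_lb T in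
  let at_ := last pt 0%nat in let ab := last pb 0%nat in
  if Rlt_dec (lb ab) (lt at_) then
    Some (TopType,
      Aiem pt (move_after ab at_ pb)
        (upd lt at_ (lt at_ - lb ab))
        (upd (upd lb ab (lb ab * lb at_ / lt at_))
             at_ ((lt at_ - lb ab) * lb at_ / lt at_)))
  else if Rlt_dec (lt at_) (lb ab) then
    Some (BotType,
      Aiem (move_after at_ ab pt) pb
        (upd (upd lt at_ (lt at_ * lt ab / lb ab))
             ab ((lb ab - lt at_) * lt ab / lb ab))
        (upd lb ab (lb ab - lt at_)))
  else None.

(* A finite path in the Rauzy diagram starting at the data of T is a finite
   sequence of arrows, each determined by its type (R_t or R_b).
   [follows T gam]: the first |gam| steps of the Rauzy-Veech algorithm of T
   are defined and follow gam. *)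
Fixpoint follows (T : aiem) (gam : list rv_type) : Prop :=
  match gam with
  | [] => True
  | g :: gam' =>
      exists T', rv_step T = Some (g, T') /\ follows T' gam'
  end.

From Stdlib Require Import Reals List Arith Permutation Lra Lia Classical FunctionalExtensionality.
Import ListNotations.
Open Scope R_scope.

(* Fix a "weight function" phi and a "slope function" rho with
     rho (x + y) = rho x + rho y   and   phi (y + x) = phi y + exp (rho y) * phi x.
   Consider an affine i.e.m. with top lengths lt > 0 and slopes exp (rho (u a))
   for a vector u.  One Rauzy-Veech step transforms the data by the Rauzy move,
   the vector u by the (transposed) Rauzy-Veech cocycle, and it preserves the
   quantity  sum_a lt a * phi (u a).  Conversely every positive length vector
   after the step comes from a positive length vector before it.  Iterating
   along the path gam, the data following gam with  sum lt * phi (u) = 0  exist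
   iff the vector  phi (u_n)  (u_n = cocycle image of u) is "balanceable": some
   positive vector is orthogonal to it, i.e. it vanishes or has entries of both
   signs.  For the affine case take phi = exp - 1, rho = id, u = w (the balance
   is |I| top = |I| bottom); for the standard case take phi = id, rho = 0.
   Since exp x - 1 and x have the same sign, both conditions are equivalent. *)

Lemma fold_right_Rplus_init (l : list R) (x : R) :
  fold_right Rplus x l = fold_right Rplus 0 l + x.
Proof. induction l as [|y l IH]; simpl; [|rewrite IH]; lra. Qed.

Lemma sumA_S d f : sumA (S d) f = sumA d f + f d.
Proof.
  unfold sumA. rewrite seq_S, map_app, fold_right_app. simpl.
  rewrite fold_right_Rplus_init. lra.
Qed.

Lemma sumA_ext d f g :
  (forall a, (a < d)%nat -> f a = g a) -> sumA d f = sumA d g.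
Proof.
  induction d as [|d IH]; intros H; [reflexivity|].
  rewrite !sumA_S, IH, H; auto with arith.
Qed.

Lemma sumA_zero d f : (forall a, (a < d)%nat -> f a = 0) -> sumA d f = 0.
Proof.
  induction d as [|d IH]; intros H; [reflexivity|].
  rewrite sumA_S, IH, H; auto with arith; lra.
Qed.

Lemma sumA_minus d f g : sumA d (fun a => f a - g a) = sumA d f - sumA d g.
Proof. induction d as [|d IH]; [compute; lra|rewrite !sumA_S, IH; lra]. Qed.

Lemma sumA_opp d f : sumA d (fun a => - f a) = - sumA d f.
Proof. induction d as [|d IH]; [compute; lra|rewrite !sumA_S, IH; lra]. Qed.

Lemma sumA_nonneg d f : (forall a, (a < d)%nat -> 0 <= f a) -> 0 <= sumA d f.
Proof.
  induction d as [|d IH]; intros H; [compute; lra|].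
  rewrite sumA_S. assert (0 <= f d) by auto. assert (0 <= sumA d f) by auto with arith. lra.
Qed.

Lemma sumA_pos d f :
  (forall a, (a < d)%nat -> 0 <= f a) -> (exists a, (a < d)%nat /\ 0 < f a) ->
  0 < sumA d f.
Proof.
  induction d as [|d IH]; intros Hnn [a [Ha Hfa]]; [lia|].
  rewrite sumA_S. assert (0 <= f d) by auto.
  destruct (Nat.eq_dec a d) as [->|Hne].
  - assert (0 <= sumA d f) by (apply sumA_nonneg; auto with arith). lra.
  - assert (0 < sumA d f) by (apply IH; [auto with arith|exists a; split; [lia|auto]]). lra.
Qed.

Lemma upd_same f a v : upd f a v a = v.
Proof. unfold upd. rewrite Nat.eqb_refl. reflexivity. Qed.

Lemma upd_other f a v b : b <> a -> upd f a v b = f b.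
Proof. intros H. unfold upd. apply Nat.eqb_neq in H. rewrite H. reflexivity. Qed.

Lemma sumA_upd d f a v : (a < d)%nat -> sumA d (upd f a v) = sumA d f - f a + v.
Proof.
  induction d as [|d IH]; intros Ha; [lia|]. rewrite !sumA_S.
  destruct (Nat.eq_dec a d) as [->|Hne].
  - rewrite upd_same, (sumA_ext d (upd f d v) f); [lra|].
    intros b Hb. apply upd_other. lia.
  - rewrite IH, upd_other by lia. lra.
Qed.

Lemma sumA_upd2 d f a b v w : (a < d)%nat -> (b < d)%nat -> a <> b ->
  sumA d (upd (upd f a v) b w) = sumA d f - f a - f b + v + w.
Proof.
  intros Ha Hb Hab. rewrite !sumA_upd, upd_other by auto. lra.
Qed.

Ltac upd_cases :=
  cbn; unfold upd;
  repeat match goal with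
         | |- context [Nat.eqb ?x ?y] => destruct (Nat.eqb_spec x y); subst
         end;
  try congruence.

Definition balanceable (d : nat) (c : nat -> R) : Prop :=
  exists lam, (forall a, (a < d)%nat -> 0 < lam a) /\
              sumA d (fun a => lam a * c a) = 0.

Definition mixed_signs (d : nat) (c : nat -> R) : Prop :=
  (forall a, (a < d)%nat -> c a = 0) \/
  ((exists a, (a < d)%nat /\ 0 < c a) /\ (exists b, (b < d)%nat /\ c b < 0)).

Lemma balanceable_mixed_signs d c : balanceable d c -> mixed_signs d c.
Proof.
  intros [lam [Hpos Hsum]].
  destruct (classic (exists a, (a < d)%nat /\ 0 < c a)) as [Hp|Hp];
  destruct (classic (exists b, (b < d)%nat /\ c b < 0)) as [Hn|Hn].
  - right; auto.
  - exfalso.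
    assert (0 < sumA d (fun a => lam a * c a)); [|lra].
    apply sumA_pos.
    + intros a Ha. destruct (Rle_or_lt 0 (c a)); [|exfalso; eauto].
      specialize (Hpos a Ha). nra.
    + destruct Hp as [a [Ha Hca]]. exists a. split; auto. specialize (Hpos a Ha). nra.
  - exfalso.
    assert (0 < sumA d (fun a => - (lam a * c a))); [|rewrite sumA_opp in *; lra].
    apply sumA_pos.
    + intros a Ha. destruct (Rle_or_lt (c a) 0); [|exfalso; eauto].
      specialize (Hpos a Ha). nra.
    + destruct Hn as [a [Ha Hca]]. exists a. split; auto. specialize (Hpos a Ha). nra.
  - left. intros a Ha.
    destruct (Rtotal_order (c a) 0) as [H|[H|H]]; [exfalso; eauto|exact H|exfalso; eauto].
Qed.

(* Correcting the weight of one letter of suitable sign balances the sum. *)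
Lemma mixed_signs_balanceable d c : mixed_signs d c -> balanceable d c.
Proof.
  intros [Hz|[[a [Ha Hca]] [b [Hb Hcb]]]].
  - exists (fun _ => 1). split; [intros; lra|].
    apply sumA_zero. intros x Hx. rewrite Hz; auto; lra.
  - set (S := sumA d c).
    assert (Hk : exists k, (k < d)%nat /\ c k <> 0 /\ 0 <= S / (- c k)).
    { destruct (Rle_or_lt 0 S).
      - exists b. repeat split; [auto|lra|]. unfold Rdiv.
        apply Rmult_le_pos; [auto|]. left; apply Rinv_0_lt_compat; lra.
      - exists a. repeat split; [auto|lra|]. unfold Rdiv.
        assert (/ (- c a) < 0) by (apply Rinv_lt_0_compat; lra). nra. }
    destruct Hk as [k [Hk [Hck HS]]].
    exists (upd (fun _ => 1) k (1 + S / (- c k))). split.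
    + intros x _. unfold upd. destruct (Nat.eqb x k); lra.
    + rewrite (sumA_ext d _ (upd c k ((1 + S / (- c k)) * c k))).
      * rewrite sumA_upd by auto. fold S. field. auto.
      * intros x Hx. upd_cases; ring.
Qed.

Lemma balanceable_same_signs d c c' :
  (forall a, (a < d)%nat -> (0 < c a <-> 0 < c' a) /\ (c a < 0 <-> c' a < 0)) ->
  balanceable d c -> balanceable d c'.
Proof.
  intros Hsg Hc. apply mixed_signs_balanceable.
  destruct (balanceable_mixed_signs d c Hc) as [Hz|[[a [Ha Hp]] [b [Hb Hn]]]].
  - left. intros a Ha. specialize (Hz a Ha). destruct (Hsg a Ha) as [Hp Hn].
    destruct (Rtotal_order (c' a) 0) as [H|[H|H]]; auto; [apply Hn in H|apply Hp in H]; lra.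
  - right. split; [exists a|exists b]; split; auto; apply Hsg; auto.
Qed.

Lemma exp_minus_one_signs x : (0 < x <-> 0 < exp x - 1) /\ (x < 0 <-> exp x - 1 < 0).
Proof.
  rewrite <- exp_0.
  split; split; intros H.
  - apply exp_increasing in H. lra.
  - apply exp_lt_inv. lra.
  - apply exp_increasing in H. lra.
  - apply exp_lt_inv. lra.
Qed.

Lemma balanceable_exp_minus_one d c :
  balanceable d (fun a => exp (c a) - 1) <-> balanceable d c.
Proof.
  split; apply balanceable_same_signs; intros a _;
    destruct (exp_minus_one_signs (c a)); tauto.
Qed.

Definition admissible (d : nat) (pt pb : list nat) : Prop :=
  Permutation pt (seq 0 d) /\ Permutation pb (seq 0 d) /\
  last pt 0%nat <> last pb 0%nat.

Lemma perm_seq_in d l x : Permutation l (seq 0 d) -> In x l <-> (x < d)%nat.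
Proof. intros H. rewrite (Permutation_in' eq_refl H), in_seq. lia. Qed.

Lemma perm_seq_last d l : Permutation l (seq 0 d) -> (0 < d)%nat -> (last l 0 < d)%nat.
Proof.
  intros H Hd. destruct (exists_last (l := l)) as [l0 [x ->]].
  - intros ->. apply Permutation_nil in H. destruct d; [lia|discriminate].
  - rewrite last_last. apply (perm_seq_in d _ x H). apply in_or_app; right; left; auto.
Qed.

Lemma admissible_last d pt pb :
  admissible d pt pb -> (last pt 0 < d)%nat /\ (last pb 0 < d)%nat.
Proof.
  intros (Ht & Hb & Hne).
  assert (Hd : (0 < d)%nat).
  { destruct d; [|lia]. apply Permutation_sym, Permutation_nil in Ht, Hb. subst. contradiction. }
  split; apply (perm_seq_last d); auto.
Qed.

Definition insert_after (x y z : nat) : list nat := if Nat.eqb z y then [z; x] else [z].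

Lemma flat_map_insert_after_absent x y l :
  ~ In y l -> flat_map (insert_after x y) l = l.
Proof.
  induction l as [|z l IH]; intros H; simpl; [reflexivity|].
  unfold insert_after at 1. destruct (Nat.eqb_spec z y) as [->|_]; [exfalso; auto with datatypes|].
  simpl. rewrite IH; auto with datatypes.
Qed.

Lemma flat_map_insert_after_perm x y l :
  NoDup l -> In y l -> Permutation (flat_map (insert_after x y) l) (x :: l).
Proof.
  induction l as [|z l IH]; intros Hnd Hy; [destruct Hy|].
  inversion Hnd; subst. simpl. unfold insert_after at 1.
  destruct (Nat.eqb_spec z y) as [->|Hzy].
  - rewrite flat_map_insert_after_absent by auto. apply perm_swap.
  - destruct Hy as [Hy|Hy]; [congruence|]. simpl.
    eapply perm_trans; [apply perm_skip, IH; auto|]. apply perm_swap.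
Qed.

Lemma flat_map_insert_after_last x y l :
  l <> [] -> x <> y -> last (flat_map (insert_after x y) l) 0%nat <> y.
Proof.
  intros Hne Hxy. destruct (exists_last Hne) as [l1 [c ->]].
  rewrite flat_map_app. simpl. unfold insert_after at 2.
  destruct (Nat.eqb_spec c y).
  - replace (flat_map (insert_after x y) l1 ++ [c; x] ++ [])
      with ((flat_map (insert_after x y) l1 ++ [c]) ++ [x])
      by (rewrite <- app_assoc; reflexivity).
    rewrite last_last. auto.
  - rewrite app_nil_r, last_last. auto.
Qed.

Lemma move_last_after l y :
  NoDup l -> In y l -> y <> last l 0%nat ->
  Permutation (move_after (last l 0%nat) y l) l /\
  last (move_after (last l 0%nat) y l) 0%nat <> y.
Proof.
  intros Hnd Hy Hyl.
  destruct (exists_last (l := l)) as [l0 [x ->]]; [intros ->; destruct Hy|].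
  rewrite last_last in *.
  assert (Hx : ~ In x l0).
  { intro H. apply (NoDup_remove_2 l0 [] x); rewrite ?app_nil_r; auto. }
  assert (Hy0 : In y l0).
  { apply in_app_or in Hy as [Hy|[Hy|[]]]; [auto|congruence]. }
  assert (E : move_after x y (l0 ++ [x]) = flat_map (insert_after x y) l0).
  { unfold move_after. rewrite filter_app. simpl. rewrite Nat.eqb_refl, app_nil_r.
    rewrite forallb_filter_id; [reflexivity|].
    apply forallb_forall. intros z Hz. destruct (Nat.eqb_spec z x); subst; easy. }
  rewrite E. split.
  - eapply perm_trans; [apply flat_map_insert_after_perm|apply Permutation_cons_append].
    + eapply NoDup_app_remove_r; eauto.
    + auto.
  - apply flat_map_insert_after_last; [intros ->; destruct Hy0|congruence].
Qed.

Definition next_top (g : rv_type) (pt pb : list nat) : list nat :=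
  match g with
  | TopType => pt
  | BotType => move_after (last pt 0%nat) (last pb 0%nat) pt
  end.

Definition next_bot (g : rv_type) (pt pb : list nat) : list nat :=
  match g with
  | TopType => move_after (last pb 0%nat) (last pt 0%nat) pb
  | BotType => pb
  end.

Lemma admissible_step d g pt pb :
  admissible d pt pb -> admissible d (next_top g pt pb) (next_bot g pt pb).
Proof.
  intros HA. destruct (admissible_last d pt pb HA) as [Ht Hb].
  destruct HA as (Hpt & Hpb & Hne).
  assert (Hnd : forall l, Permutation l (seq 0 d) -> NoDup l).
  { intros l Hl. eapply Permutation_NoDup; [symmetry; eauto|apply seq_NoDup]. }
  destruct g; simpl.
  - destruct (move_last_after pb (last pt 0%nat)) as [Hperm Hlast]; auto.
    + apply (perm_seq_in d); auto.
    + repeat split; auto. eapply perm_trans; eauto.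
  - destruct (move_last_after pt (last pb 0%nat)) as [Hperm Hlast]; auto.
    + apply (perm_seq_in d); auto.
    + repeat split; auto. eapply perm_trans; eauto.
Qed.

(* Irreducible data on at least two letters are admissible: otherwise the first
   d-1 letters of both lines would form the same set. *)
Lemma in_firstn_pred d l x : (1 <= d)%nat -> Permutation l (seq 0 d) ->
  In x (firstn (d - 1) l) <-> ((x < d)%nat /\ x <> last l 0%nat).
Proof.
  intros Hd Hl.
  destruct (exists_last (l := l)) as [l0 [c ->]].
  { intros ->. apply Permutation_nil in Hl. destruct d; [lia|discriminate]. }
  assert (Hnd : NoDup (l0 ++ [c])).
  { eapply Permutation_NoDup; [symmetry; eauto|apply seq_NoDup]. }
  assert (Hlen : length l0 = (d - 1)%nat).
  { apply Permutation_length in Hl. rewrite length_app, length_seq in Hl. simpl in Hl. lia. }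
  assert (Hc : ~ In c l0).
  { intro H. apply (NoDup_remove_2 l0 [] c); rewrite ?app_nil_r; auto. }
  rewrite <- Hlen, firstn_app, Nat.sub_diag, firstn_all, last_last. simpl.
  rewrite app_nil_r, <- (perm_seq_in d _ x Hl).
  split; [intros H; split; [apply in_or_app; auto|intros ->; auto]|].
  intros [H Hxc]. apply in_app_or in H as [H|[H|[]]]; [auto|congruence].
Qed.

Lemma irreducible_admissible d pt pb : (2 <= d)%nat ->
  Permutation pt (seq 0 d) -> Permutation pb (seq 0 d) ->
  irreducible d pt pb -> admissible d pt pb.
Proof.
  intros Hd Ht Hb Hirr. repeat split; auto. intro E.
  apply (Hirr (d - 1)%nat); [lia|lia|]. intro x.
  rewrite (in_firstn_pred d pt x), (in_firstn_pred d pb x), E by (auto; lia). tauto.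
Qed.

Definition has_slopes (d : nat) (s : nat -> R) (T : aiem) : Prop :=
  (forall a, (a < d)%nat -> 0 < a_lt T a) /\
  (forall a, (a < d)%nat -> a_lb T a = exp (s a) * a_lt T a).

Definition slope_iem (pt pb : list nat) (s lt : nat -> R) : aiem :=
  Aiem pt pb lt (fun a => exp (s a) * lt a).

Lemma slope_iem_has_slopes d pt pb s lt :
  (forall a, (a < d)%nat -> 0 < lt a) -> has_slopes d s (slope_iem pt pb s lt).
Proof. intros H. split; auto. Qed.

Lemma slope_iem_flat pt pb lt : slope_iem pt pb (fun _ => 0) lt = std_iem pt pb lt.
Proof.
  unfold slope_iem, std_iem. f_equal.
  apply functional_extensionality. intro a. rewrite exp_0. ring.
Qed.

(* The action of an arrow on vectors indexed by letters: the coordinate of the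
   loser (the letter that is moved) absorbs that of the winner. *)
Definition cocycle_step (g : rv_type) (pt pb : list nat) (v : nat -> R) : nat -> R :=
  match g with
  | TopType => upd v (last pb 0%nat) (v (last pb 0%nat) + v (last pt 0%nat))
  | BotType => upd v (last pt 0%nat) (v (last pt 0%nat) + v (last pb 0%nat))
  end.

Fixpoint cocycle (gam : list rv_type) (pt pb : list nat) (v : nat -> R) : nat -> R :=
  match gam with
  | [] => v
  | g :: gam' => cocycle gam' (next_top g pt pb) (next_bot g pt pb) (cocycle_step g pt pb v)
  end.

Lemma cocycle_step_additive (rho : R -> R) g pt pb u :
  (forall x y, rho (x + y) = rho x + rho y) ->
  (fun a => rho (cocycle_step g pt pb u a)) = cocycle_step g pt pb (fun a => rho (u a)).
Proof.
  intros Hadd. apply functional_extensionality. intro a.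
  destruct g; simpl; unfold upd; destruct Nat.eqb; auto.
Qed.

Lemma rv_step_data d s T g T' :
  admissible d (a_pt T) (a_pb T) -> has_slopes d s T -> rv_step T = Some (g, T') ->
  a_pt T' = next_top g (a_pt T) (a_pb T) /\ a_pb T' = next_bot g (a_pt T) (a_pb T) /\
  has_slopes d (cocycle_step g (a_pt T) (a_pb T) s) T'.
Proof.
  destruct T as [pt pb lt lb]. intros HA [Hpos Hsl] Hstep. simpl in *.
  destruct (admissible_last d pt pb HA) as [Ht Hb]. destruct HA as (_ & _ & Hne).
  unfold rv_step in Hstep. simpl in Hstep.
  destruct (Rlt_dec _ _) as [Htop|_];
    [|destruct (Rlt_dec _ _) as [Hbot|]; [|discriminate]];
    injection Hstep as <- <-; simpl;
    set (xt := last pt 0%nat) in *; set (xb := last pb 0%nat) in *;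
    pose proof (Hpos xt Ht) as Hlt_t; pose proof (Hpos xb Hb) as Hlt_b;
    pose proof (Hsl xt Ht) as Hsl_t; pose proof (Hsl xb Hb) as Hsl_b;
    pose proof (exp_pos (s xb)) as Hexp_b;
    clearbody xt xb;
    (split; [reflexivity|split; [reflexivity|split; intros a Ha; upd_cases; auto]]).
  - lra.
  - rewrite Hsl_t. field. lra.
  - rewrite exp_plus, Hsl_t, Hsl_b. field. lra.
  - apply Rmult_lt_0_compat; [nra|apply Rinv_0_lt_compat; nra].
  - apply Rmult_lt_0_compat; [nra|apply Rinv_0_lt_compat; nra].
  - rewrite Hsl_b. field. lra.
  - rewrite exp_plus, Hsl_t, Hsl_b. field. lra.
Qed.

Lemma rv_step_balance d (phi : R -> R) s u T g T' :
  admissible d (a_pt T) (a_pb T) -> has_slopes d s T ->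
  (forall a b, phi (u b + u a) = phi (u b) + exp (s b) * phi (u a)) ->
  rv_step T = Some (g, T') ->
  sumA d (fun a => a_lt T' a * phi (cocycle_step g (a_pt T) (a_pb T) u a)) =
  sumA d (fun a => a_lt T a * phi (u a)).
Proof.
  destruct T as [pt pb lt lb]. intros HA [Hpos Hsl] Hphi Hstep. simpl in *.
  destruct (admissible_last d pt pb HA) as [Ht Hb]. destruct HA as (_ & _ & Hne).
  unfold rv_step in Hstep. simpl in Hstep.
  destruct (Rlt_dec _ _) as [_|_];
    [|destruct (Rlt_dec _ _) as [_|_]; [|discriminate]];
    injection Hstep as <- <-; simpl;
    set (xt := last pt 0%nat) in *; set (xb := last pb 0%nat) in *;
    pose proof (Hpos xb Hb) as Hlt_b; pose proof (Hsl xb Hb) as Hsl_b;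
    pose proof (exp_pos (s xb)) as Hexp_b; pose proof (Hphi xt xb) as Hphi_bt;
    clearbody xt xb.
  - rewrite (sumA_ext d _ (upd (upd (fun a => lt a * phi (u a)) xt
               ((lt xt - lb xb) * phi (u xt))) xb (lt xb * phi (u xb + u xt))))
      by (intros a _; upd_cases).
    rewrite sumA_upd2 by auto. rewrite Hphi_bt, Hsl_b. ring.
  - rewrite (sumA_ext d _ (upd (upd (fun a => lt a * phi (u a)) xt
               (lt xt * lt xb / lb xb * phi (u xb + u xt)))
               xb ((lb xb - lt xt) * lt xb / lb xb * phi (u xb))))
      by (intros a _; upd_cases; rewrite Rplus_comm; reflexivity).
    rewrite sumA_upd2 by auto. rewrite Hphi_bt, Hsl_b. field. lra.
Qed.

Lemma rv_step_preimage d s pt pb g lt1 :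
  admissible d pt pb -> (forall a, (a < d)%nat -> 0 < lt1 a) ->
  exists lt, (forall a, (a < d)%nat -> 0 < lt a) /\
    rv_step (slope_iem pt pb s lt) =
    Some (g, slope_iem (next_top g pt pb) (next_bot g pt pb) (cocycle_step g pt pb s) lt1).
Proof.
  intros HA Hpos1. destruct (admissible_last d pt pb HA) as [Ht Hb].
  destruct HA as (_ & _ & Hne). unfold rv_step, slope_iem.
  destruct g; simpl;
    set (xt := last pt 0%nat) in *; set (xb := last pb 0%nat) in *;
    pose proof (Hpos1 xt Ht) as Hlt_t; pose proof (Hpos1 xb Hb) as Hlt_b;
    pose proof (exp_pos (s xb)) as Hexp_b;
    clearbody xt xb.
  - exists (upd lt1 xt (lt1 xt + exp (s xb) * lt1 xb)).
    rewrite upd_same, upd_other by auto. split.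
    { intros a Ha. upd_cases; auto. nra. }
    destruct (Rlt_dec _ _) as [_|Hc]; [|exfalso; nra].
    do 3 f_equal; apply functional_extensionality; intro a; upd_cases;
      rewrite ?exp_plus; field; nra.
  - exists (upd (upd lt1 xt (lt1 xt * exp (s xb))) xb (lt1 xb + lt1 xt)).
    rewrite upd_same, upd_other, upd_same by auto. split.
    { intros a Ha. upd_cases; auto; nra. }
    destruct (Rlt_dec _ _) as [Hc|_]; [exfalso; nra|].
    destruct (Rlt_dec _ _) as [_|Hc]; [|exfalso; nra].
    do 3 f_equal; apply functional_extensionality; intro a; upd_cases;
      rewrite ?exp_plus; field; nra.
Qed.

Section PathInvariant.
Variables (d : nat) (phi rho : R -> R).
Hypothesis rho_additive : forall x y, rho (x + y) = rho x + rho y.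
Hypothesis phi_cocycle : forall x y, phi (y + x) = phi y + exp (rho y) * phi x.

(* An i.e.m. with slopes exp (rho u) and  sum lt * phi (u) = 0  that follows gam
   makes phi (cocycle image of u) balanceable: the final lengths witness it. *)
Lemma follows_balanceable gam : forall T u,
  (gam <> [] -> admissible d (a_pt T) (a_pb T)) ->
  has_slopes d (fun a => rho (u a)) T ->
  sumA d (fun a => a_lt T a * phi (u a)) = 0 ->
  follows T gam ->
  balanceable d (fun a => phi (cocycle gam (a_pt T) (a_pb T) u a)).
Proof.
  induction gam as [|g gam IH]; intros T u Hadm Hsl Hbal Hf.
  - exists (a_lt T). split; [apply Hsl|exact Hbal].
  - destruct Hf as [T' [Hstep Hf]].
    assert (HA : admissible d (a_pt T) (a_pb T)) by (apply Hadm; discriminate).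
    destruct (rv_step_data d _ T g T' HA Hsl Hstep) as (Ept & Epb & Hsl').
    simpl. rewrite <- Ept, <- Epb. apply IH; [| | |exact Hf].
    + intros _. rewrite Ept, Epb. apply admissible_step, HA.
    + rewrite cocycle_step_additive by exact rho_additive. exact Hsl'.
    + rewrite (rv_step_balance d phi _ u T g T' HA Hsl); auto.
Qed.

Lemma balanceable_follows gam : forall pt pb u,
  (gam <> [] -> admissible d pt pb) ->
  balanceable d (fun a => phi (cocycle gam pt pb u a)) ->
  exists lt, (forall a, (a < d)%nat -> 0 < lt a) /\
    sumA d (fun a => lt a * phi (u a)) = 0 /\
    follows (slope_iem pt pb (fun a => rho (u a)) lt) gam.
Proof.
  induction gam as [|g gam IH]; intros pt pb u Hadm Hbal.
  - destruct Hbal as [lt [Hpos Hsum]]. exists lt. repeat split; auto.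
  - assert (HA : admissible d pt pb) by (apply Hadm; discriminate).
    destruct (IH _ _ (cocycle_step g pt pb u) (fun _ => admissible_step d g pt pb HA) Hbal)
      as (lt1 & Hpos1 & Hsum1 & Hf1).
    destruct (rv_step_preimage d (fun a => rho (u a)) pt pb g lt1 HA Hpos1) as (lt & Hpos & Hstep).
    exists lt. split; [exact Hpos|split].
    + pose proof (rv_step_balance d phi _ u (slope_iem pt pb _ lt) g _ HA
                   (slope_iem_has_slopes d pt pb _ lt Hpos)
                   (fun a b => phi_cocycle (u a) (u b)) Hstep) as Hinv.
      simpl in Hinv. rewrite <- Hinv. exact Hsum1.
    + eexists. split; [exact Hstep|]. rewrite <- cocycle_step_additive by exact rho_additive.
      exact Hf1.
Qed.

End PathInvariant.

Lemma exp_minus_one_cocycle x y : exp (y + x) - 1 = (exp y - 1) + exp y * (exp x - 1).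
Proof. rewrite exp_plus. ring. Qed.

Lemma unit_slope_cocycle x y : y + x = y + exp 0 * x.
Proof. rewrite exp_0. ring. Qed.

Lemma affine_to_standard d pt pb w gam T :
  (gam <> [] -> admissible d pt pb) -> is_affine_iem d pt pb w T -> follows T gam ->
  exists lam, (forall a, (a < d)%nat -> 0 < lam a) /\
    sumA d (fun a => lam a * w a) = 0 /\ follows (std_iem pt pb lam) gam.
Proof.
  intros Hadm (<- & <- & Hpos & Hsl & Hbal) Hf.
  assert (Hexp : balanceable d (fun a => exp (cocycle gam (a_pt T) (a_pb T) w a) - 1)).
  { apply (follows_balanceable d (fun x => exp x - 1) (fun x => x)); auto.
    - apply exp_minus_one_cocycle.
    - split; auto.
    - rewrite (sumA_ext d _ (fun a => a_lb T a - a_lt T a)), sumA_minus, Hbal by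
        (intros a Ha; rewrite Hsl by auto; ring).
      ring. }
  apply (proj1 (balanceable_exp_minus_one d _)) in Hexp.
  destruct (balanceable_follows d (fun x => x) (fun _ => 0)
              (fun _ _ => eq_sym (Rplus_0_r 0)) unit_slope_cocycle
              gam _ _ w Hadm Hexp) as (lam & Hlam & Hsum & Hf').
  exists lam. repeat split; auto. rewrite <- slope_iem_flat. exact Hf'.
Qed.

Lemma standard_to_affine d pt pb w gam lam :
  (gam <> [] -> admissible d pt pb) -> (forall a, (a < d)%nat -> 0 < lam a) ->
  sumA d (fun a => lam a * w a) = 0 -> follows (std_iem pt pb lam) gam ->
  exists T, is_affine_iem d pt pb w T /\ follows T gam.
Proof.
  intros Hadm Hpos Hsum Hf.
  assert (Hw : balanceable d (fun a => cocycle gam pt pb w a)).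
  { apply (follows_balanceable d (fun x => x) (fun _ => 0)
             (fun _ _ => eq_sym (Rplus_0_r 0)) unit_slope_cocycle
             gam (std_iem pt pb lam) w); auto.
    split; auto. intros a _. simpl. rewrite exp_0. ring. }
  apply (proj2 (balanceable_exp_minus_one d _)) in Hw.
  destruct (balanceable_follows d (fun x => exp x - 1) (fun x => x) (fun _ _ => eq_refl)
              exp_minus_one_cocycle gam _ _ w Hadm Hw)
    as (lt & Hlt & Hbal & Hf').
  exists (slope_iem pt pb w lt). split; [|exact Hf'].
  repeat split; auto. simpl.
  enough (sumA d (fun a => exp (w a) * lt a) - sumA d lt = 0) by lra.
  rewrite <- sumA_minus, <- Hbal. apply sumA_ext. intros a _. ring.
Qed.

(* A balanced affine i.e.m. that makes at least one step has admissible data: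
   on one letter the top and bottom intervals coincide, so no step is defined. *)
Lemma balanced_admissible d pt pb T gam : (1 <= d)%nat ->
  Permutation pt (seq 0 d) -> Permutation pb (seq 0 d) -> irreducible d pt pb ->
  a_pt T = pt -> a_pb T = pb -> sumA d (a_lt T) = sumA d (a_lb T) ->
  follows T gam -> gam <> [] -> admissible d pt pb.
Proof.
  intros Hd Ht Hb Hirr Ept Epb Hbal Hf Hne.
  destruct (Nat.eq_dec d 1) as [->|Hd2]; [|apply irreducible_admissible; auto; lia].
  apply Permutation_sym, Permutation_length_1_inv in Ht, Hb. subst.
  destruct gam as [|g gam]; [contradiction|]. destruct Hf as [T' [Hstep _]].
  unfold sumA in Hbal. simpl in Hbal. unfold rv_step in Hstep.
  rewrite Ept, Epb in Hstep. simpl in Hstep.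
  destruct (Rlt_dec _ _); [lra|]. destruct (Rlt_dec _ _); [lra|discriminate].
Qed.

Theorem lemma2 (d : nat) (pt pb : list nat)
  (Hd : (1 <= d)%nat)
  (Hpt : Permutation pt (seq 0 d)) (Hpb : Permutation pb (seq 0 d))
  (Hirr : irreducible d pt pb)
  (w : nat -> R) (gam : list rv_type) :
  (exists T : aiem, is_affine_iem d pt pb w T /\ follows T gam)
  <->
  (exists lam : nat -> R,
      (forall a, (a < d)%nat -> 0 < lam a) /\
      sumA d (fun a => lam a * w a) = 0 /\
      follows (std_iem pt pb lam) gam).
Proof.
  split.
  - intros [T [HT Hf]]. apply (affine_to_standard d pt pb w gam T); auto.
    destruct HT as (Ept & Epb & _ & _ & Hbal).
    apply (balanced_admissible d pt pb T gam); auto.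
  - intros (lam & Hpos & Hw & Hf). apply (standard_to_affine d pt pb w gam lam); auto.
    apply (balanced_admissible d pt pb (std_iem pt pb lam) gam); auto.
Qed.
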